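(* For every $n\ge1$, the itinerary map $\iota$ is a well-defined map $\mathcal{T}_n\to\mathcal{U}_n$, and it is injective.
   Context: $\Gamma=\{0,1,2,3\}$. A word $w$ is primitive if it is not $v^m$ with $v$ nonempty and $m\ge2$; $\mathcal{U}_n$ is the set of primitive words $w\in\Gamma^n$ with $w\notin\{1,2\}^n$. $C=\{(a,b,c)\in\mathbb{R}^3: a\ge b\ge c>0,\ a+b+c=1\}$, $C^*=\{(a,b,c)\in C: a\ne1/2\}$. Regions of $C^*$: $R_0=\{a<1/2\}$, $R_1=\{2a-1\ge2b,\ a>1/2\}$, $R_2=\{2b>2a-1\ge2c,\ a>1/2\}$, $R_3=\{2c>2a-1,\ a>1/2\}$. Sorted pedal map $P:C^*\to C$: $P(a,b,c)=(1-2c,1-2b,1-2a)$ on $R_0$, $(2a-1,2b,2c)$ on $R_1$, $(2b,2a-1,2c)$ on $R_2$, $(2b,2c,2a-1)$ on $R_3$. $\mathcal{T}_n=\{p\in C: P^j(p)\text{ defined for }0\le j<n,\ P^n(p)=p,\ P^d(p)\ne p\text{ for }1\le d<n\}$. The itinerary $\iota(p)=w_0\cdots w_{n-1}\in\Gamma^n$ of $p\in\mathcal{T}_n$ is defined by $P^j(p)\in R_{w_j}$ for $0\le j<n$. *)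

From Stdlib Require Import Reals Lra Lia List.
Import ListNotations.
Open Scope R_scope.

Definition pt := (R * R * R)%type.

Definition inC (p : pt) : Prop :=
  let '(a, b, c) := p in a >= b /\ b >= c /\ c > 0 /\ a + b + c = 1.

Definition inCstar (p : pt) : Prop :=
  inC p /\ (let '(a, _, _) := p in a <> 1/2).

(* Regions R_0, ..., R_3 of C^*, indexed by letters of Gamma = {0,1,2,3}. *)
Definition inRegion (k : nat) (p : pt) : Prop :=
  inCstar p /\
  let '(a, b, c) := p in
  match k with
  | 0%nat => a < 1/2
  | 1%nat => 2*a - 1 >= 2*b /\ a > 1/2
  | 2%nat => 2*b > 2*a - 1 /\ 2*a - 1 >= 2*c /\ a > 1/2
  | 3%nat => 2*c > 2*a - 1 /\ a > 1/2
  | _ => False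
  end.

(* Sorted pedal map.  It is made total for convenience; its values outside
   C^* are irrelevant since all statements require the iterates to lie in C^*. *)
Definition P (p : pt) : pt :=
  let '(a, b, c) := p in
  if Rlt_dec a (1/2) then (1 - 2*c, 1 - 2*b, 1 - 2*a)
  else if Rge_dec (2*a - 1) (2*b) then (2*a - 1, 2*b, 2*c)
  else if Rge_dec (2*a - 1) (2*c) then (2*b, 2*a - 1, 2*c)
  else (2*b, 2*c, 2*a - 1).

Definition Piter (j : nat) (p : pt) : pt := Nat.iter j P p.

(* T_n : points of exact period n whose first n iterates are defined. *)
Definition inT (n : nat) (p : pt) : Prop :=
  inC p /\
  (forall j : nat, (j < n)%nat -> inCstar (Piter j p)) /\
  Piter n p = p /\
  (forall d : nat, (1 <= d < n)%nat -> Piter d p <> p).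

Definition word_on_Gamma (w : list nat) : Prop := Forall (fun x => (x < 4)%nat) w.

Definition primitive (w : list nat) : Prop :=
  ~ exists (v : list nat) (m : nat),
      v <> [] /\ (2 <= m)%nat /\ w = concat (repeat v m).

Definition inU (n : nat) (w : list nat) : Prop :=
  word_on_Gamma w /\ length w = n /\ primitive w /\
  ~ Forall (fun x => x = 1%nat \/ x = 2%nat) w.

Definition is_itinerary (n : nat) (p : pt) (w : list nat) : Prop :=
  word_on_Gamma w /\ length w = n /\
  forall j : nat, (j < n)%nat -> inRegion (nth j w 0%nat) (Piter j p).

(* On each region the sorted pedal map is affine with linear part twice a
   signed permutation matrix, so it doubles the l1 distance between two points
   of the same region.  Two n-periodic points with the same itinerary therefore
   satisfy d = 2^n d, hence coincide: this is injectivity.  If the itinerary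
   were a proper power v^m, the point P^|v|(p) would be n-periodic with the same
   itinerary as p, hence equal to p, contradicting the exact period.  Finally,
   on R_1 and R_2 the smallest coordinate doubles, so an itinerary in {1,2}^n
   would force c = 2^n c with c > 0. *)
From Pilot Require Import Defs.
From Stdlib Require Import Reals Lra Lia List Permutation.
Open Scope R_scope.

Definition dist (p q : pt) : R :=
  let '(a, b, c) := p in let '(a', b', c') := q in
  Rabs (a - a') + Rabs (b - b') + Rabs (c - c').

Lemma dist_ge0 (p q : pt) : 0 <= dist p q.
Proof.
  destruct p as [[a b] c], q as [[a' b'] c']; simpl.
  pose proof (Rabs_pos (a - a')); pose proof (Rabs_pos (b - b'));
  pose proof (Rabs_pos (c - c')); lra.
Qed.

Lemma dist_eq0 (p q : pt) : dist p q = 0 -> p = q.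
Proof.
  destruct p as [[a b] c], q as [[a' b'] c']; simpl; intro H.
  pose proof (Rabs_pos (a - a')); pose proof (Rabs_pos (b - b'));
  pose proof (Rabs_pos (c - c')).
  assert (Ha : Rabs (a - a') = 0) by lra.
  assert (Hb : Rabs (b - b') = 0) by lra.
  assert (Hc : Rabs (c - c') = 0) by lra.
  revert Ha Hb Hc; unfold Rabs;
  destruct (Rcase_abs (a - a')), (Rcase_abs (b - b')), (Rcase_abs (c - c'));
  intros; (f_equal; [f_equal|]; lra).
Qed.

Lemma Rabs_1_sub_double (x y : R) : Rabs ((1 - 2*x) - (1 - 2*y)) = 2 * Rabs (x - y).
Proof. unfold Rabs; destruct (Rcase_abs _), (Rcase_abs _); lra. Qed.

Lemma Rabs_double_sub_1 (x y : R) : Rabs ((2*x - 1) - (2*y - 1)) = 2 * Rabs (x - y).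
Proof. unfold Rabs; destruct (Rcase_abs _), (Rcase_abs _); lra. Qed.

Lemma Rabs_double (x y : R) : Rabs (2*x - 2*y) = 2 * Rabs (x - y).
Proof. unfold Rabs; destruct (Rcase_abs _), (Rcase_abs _); lra. Qed.

Ltac case_P_branches :=
  repeat match goal with
  | |- context [if Rlt_dec ?x ?y then _ else _] => destruct (Rlt_dec x y)
  | |- context [if Rge_dec ?x ?y then _ else _] => destruct (Rge_dec x y)
  end.

Lemma dist_P_inRegion (k : nat) (p q : pt) :
  inRegion k p -> inRegion k q -> dist (P p) (P q) = 2 * dist p q.
Proof.
  destruct p as [[a b] c], q as [[a' b'] c'].
  unfold inRegion, inCstar, inC; intros [[Hp Hp'] Hk] [[Hq Hq'] Hk'].
  unfold P; case_P_branches; simpl;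
  rewrite ?Rabs_1_sub_double, ?Rabs_double_sub_1, ?Rabs_double;
  destruct k as [|[|[|[|]]]]; lra.
Qed.

Lemma Piter_add (i j : nat) (p : pt) : Piter (i + j) p = Piter i (Piter j p).
Proof. apply Nat.iter_add. Qed.

Lemma dist_Piter_itinerary (n : nat) (p q : pt) (w : list nat) :
  is_itinerary n p w -> is_itinerary n q w ->
  forall j, (j <= n)%nat -> dist (Piter j p) (Piter j q) = 2 ^ j * dist p q.
Proof.
  intros [_ [_ Hp]] [_ [_ Hq]] j; induction j as [|j IH]; intro Hj.
  - simpl; lra.
  - change (dist (P (Piter j p)) (P (Piter j q)) = 2 * 2 ^ j * dist p q).
    rewrite (dist_P_inRegion (nth j w 0%nat)) by (apply Hp || apply Hq; lia).
    rewrite IH by lia; ring.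
Qed.

Lemma periodic_itinerary_inj (n : nat) (p q : pt) (w : list nat) :
  (1 <= n)%nat -> Piter n p = p -> Piter n q = q ->
  is_itinerary n p w -> is_itinerary n q w -> p = q.
Proof.
  intros Hn Hp Hq Hwp Hwq; apply dist_eq0.
  pose proof (dist_Piter_itinerary n p q w Hwp Hwq n (le_n n)) as E.
  rewrite Hp, Hq in E.
  pose proof (dist_ge0 p q).
  assert (H2n : 2 <= 2 ^ n).
  { destruct n as [|m]; [lia|]; simpl; pose proof (pow_R1_Rle 2 m); lra. }
  nra.
Qed.

Lemma is_itinerary_rotate (n d : nat) (p : pt) (w : list nat) :
  (d <= n)%nat -> Piter n p = p -> is_itinerary n p w ->
  is_itinerary n (Piter d p) (skipn d w ++ firstn d w).
Proof.
  intros Hd Hper [Hw [Hlen Hreg]].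
  assert (Hskip : length (skipn d w) = (n - d)%nat) by (rewrite length_skipn; lia).
  split; [|split].
  - assert (Hperm : Permutation w (skipn d w ++ firstn d w)).
    { rewrite <- (firstn_skipn d w) at 1; apply Permutation_app_comm. }
    exact (Permutation_Forall Hperm Hw).
  - rewrite length_app, Hskip, firstn_length_le; lia.
  - intros j Hj; rewrite <- Piter_add.
    destruct (Nat.lt_ge_cases j (n - d)) as [Hjd|Hjd].
    + rewrite app_nth1, nth_skipn by lia.
      rewrite Nat.add_comm; apply Hreg; lia.
    + rewrite app_nth2, nth_firstn, Hskip by lia.
      replace (j - (n - d) <? d)%nat with true by (symmetry; apply Nat.ltb_lt; lia).
      replace (j + d)%nat with ((j - (n - d)) + n)%nat by lia.
      rewrite Piter_add, Hper; apply Hreg; lia.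
Qed.

Lemma concat_repeat_S_r (v : list nat) (m : nat) :
  concat (repeat v (S m)) = concat (repeat v m) ++ v.
Proof.
  induction m as [|m IH]; [simpl; now rewrite app_nil_r|].
  change (v ++ concat (repeat v (S m)) = (v ++ concat (repeat v m)) ++ v).
  now rewrite IH, app_assoc.
Qed.

Lemma length_concat_repeat (v : list nat) (m : nat) :
  length (concat (repeat v m)) = (m * length v)%nat.
Proof. induction m as [|m IH]; simpl; [reflexivity|]; rewrite length_app, IH; lia. Qed.

Lemma primitive_itinerary (n : nat) (p : pt) (w : list nat) :
  inT n p -> is_itinerary n p w -> Defs.primitive w.
Proof.
  intros [_ [_ [Hper Hexact]]] Hit [v [m [Hv [Hm Ew]]]].
  destruct m as [|m]; [lia|].
  set (u := concat (repeat v m)).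
  assert (Hvu : w = v ++ u) by exact Ew.
  assert (Huv : w = u ++ v) by (rewrite Ew; apply concat_repeat_S_r).
  assert (Hlen : n = (S m * length v)%nat).
  { destruct Hit as [_ [<- _]]; rewrite Ew; apply length_concat_repeat. }
  assert (Hv1 : (1 <= length v)%nat) by (destruct v; [congruence|simpl; lia]).
  assert (Hrot : skipn (length v) w ++ firstn (length v) w = w).
  { rewrite Hvu at 1 2.
    rewrite skipn_app, firstn_app, skipn_all, firstn_all, Nat.sub_diag.
    simpl; rewrite app_nil_r; symmetry; exact Huv. }
  apply (Hexact (length v)); [lia|].
  apply (periodic_itinerary_inj n _ _ w); [lia| |exact Hper| |exact Hit].
  - rewrite <- Piter_add, Nat.add_comm, Piter_add, Hper; reflexivity.
  - rewrite <- Hrot at 1; apply is_itinerary_rotate; [lia|exact Hper|exact Hit].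
Qed.

Definition third (p : pt) : R := let '(_, _, c) := p in c.

Lemma third_P_inRegion12 (x : pt) :
  inRegion 1 x \/ inRegion 2 x -> third (P x) = 2 * third x.
Proof.
  destruct x as [[a b] c]; unfold inRegion, inCstar, inC.
  intros [[_ H]|[_ H]]; unfold P; case_P_branches; simpl; lra.
Qed.

Lemma itinerary_not_in12 (n : nat) (p : pt) (w : list nat) :
  (1 <= n)%nat -> inT n p -> is_itinerary n p w ->
  ~ Forall (fun x => x = 1%nat \/ x = 2%nat) w.
Proof.
  intros Hn [HC [_ [Hper _]]] [_ [Hlen Hreg]] H12.
  rewrite Forall_nth in H12.
  assert (Hthird : forall j, (j <= n)%nat -> third (Piter j p) = 2 ^ j * third p).
  { induction j as [|j IH]; intro Hj; [simpl; lra|].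
    change (third (P (Piter j p)) = 2 * 2 ^ j * third p).
    rewrite third_P_inRegion12, IH by
      (lia || (pose proof (Hreg j ltac:(lia)) as Hj';
               destruct (H12 j 0%nat ltac:(lia)) as [E|E]; rewrite E in Hj'; auto)).
    ring. }
  pose proof (Hthird n (le_n n)) as E; rewrite Hper in E.
  destruct p as [[a b] c]; unfold inC in HC; simpl in E.
  assert (H2n : 2 <= 2 ^ n).
  { destruct n as [|m]; [lia|]; simpl; pose proof (pow_R1_Rle 2 m); lra. }
  nra.
Qed.

(* [region_of] mirrors the case split in the definition of [P]. *)
Definition region_of (p : pt) : nat :=
  let '(a, b, c) := p in
  if Rlt_dec a (1/2) then 0%nat
  else if Rge_dec (2*a - 1) (2*b) then 1%nat
  else if Rge_dec (2*a - 1) (2*c) then 2%nat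
  else 3%nat.

Lemma region_of_lt4 (p : pt) : (region_of p < 4)%nat.
Proof. destruct p as [[a b] c]; unfold region_of; case_P_branches; lia. Qed.

Lemma inRegion_region_of (p : pt) : inCstar p -> inRegion (region_of p) p.
Proof.
  intro H; split; [exact H|].
  destruct p as [[a b] c]; unfold inCstar, inC in H.
  unfold region_of; case_P_branches; simpl; lra.
Qed.

Lemma inRegion_unique (k k' : nat) (p : pt) : inRegion k p -> inRegion k' p -> k = k'.
Proof.
  destruct p as [[a b] c]; unfold inRegion, inCstar, inC.
  intros [[[_ [Hbc _]] _] Hk] [_ Hk'].
  destruct k as [|[|[|[|]]]], k' as [|[|[|[|]]]]; first [reflexivity | tauto | lra].
Qed.

Definition itinerary (n : nat) (p : pt) : list nat :=
  map (fun j => region_of (Piter j p)) (seq 0 n).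

Lemma is_itinerary_itinerary (n : nat) (p : pt) :
  (forall j, (j < n)%nat -> inCstar (Piter j p)) -> is_itinerary n p (itinerary n p).
Proof.
  intro Hstar; unfold itinerary; split; [|split].
  - apply Forall_map, Forall_forall; intros; apply region_of_lt4.
  - now rewrite length_map, length_seq.
  - intros j Hj.
    rewrite nth_indep with (d' := region_of (Piter 0 p))
      by (rewrite length_map, length_seq; lia).
    rewrite (map_nth (fun j => region_of (Piter j p))), seq_nth by lia.
    now apply inRegion_region_of, Hstar.
Qed.

Lemma is_itinerary_unique (n : nat) (p : pt) (w w' : list nat) :
  is_itinerary n p w -> is_itinerary n p w' -> w = w'.
Proof.
  intros [_ [Hl Hr]] [_ [Hl' Hr']].
  apply (nth_ext _ _ 0%nat 0%nat); [congruence|].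
  intros j Hj; apply (inRegion_unique _ _ (Piter j p)); [apply Hr|apply Hr']; lia.
Qed.

Theorem mainTheorem8 :
  forall n : nat, (1 <= n)%nat ->
    (forall p : pt, inT n p ->
       (exists! w : list nat, is_itinerary n p w) /\
       (forall w : list nat, is_itinerary n p w -> inU n w)) /\
    (forall (p q : pt) (w : list nat),
       inT n p -> inT n q -> is_itinerary n p w -> is_itinerary n q w -> p = q).
Proof.
  intros n Hn; split.
  - intros p Hp; split.
    + exists (itinerary n p); split.
      * apply is_itinerary_itinerary, Hp.
      * intros w'; apply is_itinerary_unique, is_itinerary_itinerary, Hp.
    + intros w Hw.
      pose proof Hw as [HG [Hl _]].
      split; [exact HG|split; [exact Hl|split]].
      * exact (primitive_itinerary n p w Hp Hw).
      * exact (itinerary_not_in12 n p w Hn Hp Hw).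
  - intros p q w Hp Hq.
    apply (periodic_itinerary_inj n p q w Hn); [apply Hp|apply Hq].
Qed.
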